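(* Let $q$ be an odd prime power, let $\omega$ be a non-square in $\mathbb F_q$ and $\epsilon\in\mathbb F_{q^2}$ with $\epsilon^2=\omega$; write $z=z_1+\epsilon z_2$ ($z_1,z_2\in\mathbb F_q$) for $z\in\mathbb F_{q^2}$. Let $\mathcal C: aX^2+bXY+cXZ+YZ+eZ^2=0$ be a non-singular conic of $\mathrm{PG}(2,q^2)$ with $a,b,c,e\in\mathbb F_{q^2}$ and $b\notin\mathbb F_q$ (i.e. $b_2\ne0$). Put $A=-a_2b_1+a_1b_2$, $B=b_2c_1-b_1c_2+a_1\cdot 0-a_2$, $C=c_1\cdot 0-c_2+b_2e_1-b_1e_2$, $D=-e_2$ (the general formulas $A=-a_2b_1+a_1b_2$, $B=b_2c_1-b_1c_2-a_2d_1+a_1d_2$, $C=-c_2d_1+c_1d_2+b_2e_1-b_1e_2$, $D=d_2e_1-d_1e_2$ with $d=1$, i.e. $d_1=1,d_2=0$), and let $\mathcal S$ be the (irreducible) cubic surface of $\mathrm{PG}(3,q)$ in coordinates $(t_1:t_2:X:Z)$ given by $$2t_1t_2(b_1X+d_1Z)-(t_1^2+\omega t_2^2)(b_2X+d_2Z)+AX^3+BX^2Z+CXZ^2+DZ^3=0$$ (with $d_1=1,d_2=0$). Then $\mathcal S$ has at most one singular point; if $P$ is a singular point of $\mathcal S$, then $P$ is a double point and $P$ is defined over $\mathbb F_q$.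
   Context: Singular points are considered over the algebraic closure of $\mathbb F_q$. The normalization $d=1$ and the irreducibility condition $b_1d_2-b_2d_1\ne0$ are the standing assumptions of the section in which the result is stated. *)

From HB Require Import structures.
From mathcomp Require Import all_boot all_order all_algebra all_field.
From mathcomp Require Import mpoly.
Set Implicit Arguments. Unset Strict Implicit. Unset Printing Implicit Defensive.
Import Order.TTheory GRing.Theory Num.Theory.
Local Open Scope ring_scope.

Definition i0 {n} : 'I_n.+1 := @Ordinal n.+1 0 erefl.
Definition i1 {n} : 'I_n.+2 := @Ordinal n.+2 1 erefl.
Definition i2 {n} : 'I_n.+3 := @Ordinal n.+3 2 erefl.
Definition i3 {n} : 'I_n.+4 := @Ordinal n.+4 3 erefl.

Definition conic_poly (R : comRingType) (a b c d e : R) : {mpoly R[3]} :=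
  a *: ('X_i0 * 'X_i0) + b *: ('X_i0 * 'X_i1) + c *: ('X_i0 * 'X_i2)
  + d *: ('X_i1 * 'X_i2) + e *: ('X_i2 * 'X_i2).

Definition singular_point (R : comRingType) (n : nat) (p : {mpoly R[n]})
  (v : 'I_n -> R) : Prop :=
  (exists i, v i != 0) /\ p.@[v] = 0 /\ forall i, (mderiv i p).@[v] = 0.

(* A singular point is a double point if its multiplicity is exactly 2,
   i.e. some second partial derivative does not vanish at it. *)
Definition double_point (R : comRingType) (n : nat) (p : {mpoly R[n]})
  (v : 'I_n -> R) : Prop :=
  singular_point p v /\ exists i j, (mderiv j (mderiv i p)).@[v] != 0.

Definition proj_eq (R : comRingType) (n : nat) (v w : 'I_n -> R) : Prop :=
  exists lambda : R, lambda != 0 /\ forall i, v i = lambda * w i.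

Definition surface_poly (R : comRingType) (w b1 b2 d1 d2 A B C D : R)
  : {mpoly R[4]} :=
  let t1 := 'X_i0 in let t2 := 'X_i1 in let X := 'X_i2 in let Z := 'X_i3 in
  2%:R *: (t1 * t2 * (b1 *: X + d1 *: Z))
  - (t1 * t1 + w *: (t2 * t2)) * (b2 *: X + d2 *: Z)
  + A *: (X * X * X) + B *: (X * X * Z) + C *: (X * Z * Z) + D *: (Z * Z * Z).

Definition surfcoefA (R : ringType) (a1 a2 b1 b2 : R) : R := - a2 * b1 + a1 * b2.
Definition surfcoefB (R : ringType) (a1 a2 b1 b2 c1 c2 d1 d2 : R) : R :=
  b2 * c1 - b1 * c2 - a2 * d1 + a1 * d2.
Definition surfcoefC (R : ringType) (b1 b2 c1 c2 d1 d2 e1 e2 : R) : R :=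
  - c2 * d1 + c1 * d2 + b2 * e1 - b1 * e2.
Definition surfcoefD (R : ringType) (d1 d2 e1 e2 : R) : R := d2 * e1 - d1 * e2.

From HB Require Import structures.
From mathcomp Require Import all_boot all_order all_algebra all_field.
From mathcomp Require Import mpoly ring.
Import GRing.Theory.
Set Implicit Arguments. Unset Strict Implicit. Unset Printing Implicit Defensive.
Local Open Scope ring_scope.

(* At a singular point the equations dS/dt1 = dS/dt2 = 0 force t1 = t2 = 0:
   otherwise t1 = r t2 with r^2 = w, and S = 0 says that the cubic part vanishes
   at (X, (r b2 - b1) X), where it equals b2 X^3 (delta1 - r delta2).  But
   delta1 + eps delta2 = a + e b^2 - b c is nonzero because the conic is
   nonsingular, and r is not in F_q.  Hence the singular points are the
   (0:0:X:Z) with (X:Z) a double root of the nonzero binary cubic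
   A X^3 + B X^2 Z + C X Z^2 + D Z^3.  In odd characteristic such a cubic has
   at most one double root, which is therefore fixed by the q-Frobenius, hence
   rational. *)

Lemma mderivXU (R : comNzRingType) n (i j : 'I_n) :
  mderiv j ('X_i : {mpoly R[n]}) = (i == j)%:R.
Proof.
rewrite mderivX mnm1E; case: eqP => [->|_]; last by rewrite scale0r.
have -> : (U_(j) - U_(j))%MM = 0%MM by apply/mnmP=> k; rewrite !mnmE subnn.
by rewrite mpolyX0 scale1r.
Qed.

Lemma ord4_cases (i : 'I_4) : [\/ i = i0, i = i1, i = i2 | i = i3].
Proof.
by case: i => [[|[|[|[|//]]]] Hi]; [constructor 1|constructor 2|constructor 3|constructor 4];
  apply: val_inj.
Qed.

Definition cubic_form (K : comNzRingType) (A B C D X Z : K) : K :=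
  A * X ^+ 3 + B * X ^+ 2 * Z + C * X * Z ^+ 2 + D * Z ^+ 3.
Definition cubic_dX (K : comNzRingType) (A B C D X Z : K) : K :=
  3 * A * X ^+ 2 + 2 * B * X * Z + C * Z ^+ 2.
Definition cubic_dZ (K : comNzRingType) (A B C D X Z : K) : K :=
  B * X ^+ 2 + 2 * C * X * Z + 3 * D * Z ^+ 2.

Definition cubic_singular (K : comNzRingType) (A B C D X Z : K) : Prop :=
  [/\ cubic_form A B C D X Z = 0, cubic_dX A B C D X Z = 0 & cubic_dZ A B C D X Z = 0].

Section BinaryCubic.
Variables (K : comNzRingType) (A B C D : K).
Local Notation f := (cubic_form A B C D).
Local Notation fX := (cubic_dX A B C D).
Local Notation fZ := (cubic_dZ A B C D).

Lemma cubic_form_homog (l X Z : K) : f (l * X) (l * Z) = l ^+ 3 * f X Z.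
Proof. by rewrite /cubic_form; ring. Qed.

Lemma cubic_form_expand (x z X0 Z0 X1 Z1 : K) :
  f (x * X0 + z * X1) (x * Z0 + z * Z1) =
    x ^+ 3 * f X0 Z0 + x ^+ 2 * z * (fX X0 Z0 * X1 + fZ X0 Z0 * Z1)
    + x * z ^+ 2 * (fX X1 Z1 * X0 + fZ X1 Z1 * Z0) + z ^+ 3 * f X1 Z1.
Proof. by rewrite /cubic_form /cubic_dX /cubic_dZ; ring. Qed.

End BinaryCubic.

Section BinaryCubicField.
Variables (K : fieldType) (A B C D : K).
Hypothesis two_neq0 : (2 : K) != 0.

Lemma cubic_form_eq0 :
  (forall X Z, cubic_form A B C D X Z = 0) -> [/\ A = 0, B = 0, C = 0 & D = 0].
Proof.
move=> f0.
have A0 : A = 0 by rewrite -(f0 1 0) /cubic_form; ring.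
have D0 : D = 0 by rewrite -(f0 0 1) /cubic_form; ring.
have B2 : 2 * B = cubic_form A B C D 1 1 - cubic_form A B C D 1 (-1).
  by rewrite /cubic_form A0 D0; ring.
rewrite !f0 subrr in B2.
have B0 : B = 0 by move/eqP: B2; rewrite mulf_eq0 (negbTE two_neq0) => /eqP.
have C0 : C = 0 by rewrite -(f0 1 1) /cubic_form A0 B0 D0; ring.
by split.
Qed.

Lemma cubic_singular_proportional (X0 Z0 X1 Z1 : K) :
  ~ [/\ A = 0, B = 0, C = 0 & D = 0] ->
  cubic_singular A B C D X0 Z0 -> cubic_singular A B C D X1 Z1 -> X0 * Z1 = X1 * Z0.
Proof.
move=> cubic_neq0 [f0 fX0 fZ0] [f1 fX1 fZ1].
have [/subr0_eq //|det_neq0] := eqVneq (X0 * Z1 - X1 * Z0) 0.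
case: cubic_neq0; apply: cubic_form_eq0 => X Z.
pose x := (X * Z1 - Z * X1) / (X0 * Z1 - X1 * Z0).
pose z := (X0 * Z - Z0 * X) / (X0 * Z1 - X1 * Z0).
have -> : X = x * X0 + z * X1 by rewrite /x /z; field.
have -> : Z = x * Z0 + z * Z1 by rewrite /x /z; field.
by rewrite cubic_form_expand f0 fX0 fZ0 f1 fX1 fZ1; ring.
Qed.

End BinaryCubicField.

Section Frobenius.
Variables (F : finFieldType) (M : fieldType) (phi : {rmorphism F -> M}).
Local Notation q := #|F|.

Lemma pnat_pchar_card : [pchar M].-nat q.
Proof.
have [p pr_p pchar_p] := finPcharP F.
have -> : q = (p ^ logn p q)%N by exact: card_pprimeChar pchar_p.
by rewrite pnatX pnatE // (fmorph_pchar phi) pchar_p.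
Qed.

Lemma exprD_card (x y : M) : (x + y) ^+ q = x ^+ q + y ^+ q.
Proof. exact: exprDn_pchar pnat_pchar_card. Qed.

Lemma fmorph_expr_card (c : F) : phi c ^+ q = phi c.
Proof. by rewrite -rmorphXn expf_card. Qed.

Lemma natr_expr_card n : (n%:R : M) ^+ q = n%:R.
Proof. by rewrite -(rmorph_nat phi) fmorph_expr_card. Qed.

(* The image of F consists of the roots of X^q - X = \prod_(c : F) (X - c). *)
Lemma expr_card_fixed (y : M) : y ^+ q = y -> exists c, y = phi c.
Proof.
move=> y_fixed.
have := congr1 (map_poly phi) (finField_genPoly F).
rewrite rmorphB /= map_polyXn map_polyX rmorph_prod /= => /(congr1 (horner^~ y)).
rewrite !hornerE horner_prod y_fixed subrr => /esym/eqP.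
rewrite prodf_seq_eq0 => /hasP[c _].
by rewrite map_polyXsubC hornerXsubC => /eqP/subr0_eq ->; exists c.
Qed.

Lemma cubic_singular_frob (A B C D : F) (X Z : M) :
  cubic_singular (phi A) (phi B) (phi C) (phi D) X Z ->
  cubic_singular (phi A) (phi B) (phi C) (phi D) (X ^+ q) (Z ^+ q).
Proof.
have q_gt0 : (0 < q)%N by apply/card_gt0P; exists 0.
have frob0 : (0 : M) ^+ q = 0 by rewrite expr0n eqn0Ngt q_gt0.
rewrite /cubic_singular /cubic_form /cubic_dX /cubic_dZ => -[f0 fX fZ].
split; [rewrite -[RHS]frob0 -f0|rewrite -[RHS]frob0 -fX|rewrite -[RHS]frob0 -fZ];
  by rewrite !exprD_card !exprMn !fmorph_expr_card ?natr_expr_card; ring.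
Qed.

Lemma frob_stable_ratio (X Z : M) : (X != 0) || (Z != 0) -> X * Z ^+ q = X ^+ q * Z ->
  exists x z : F, ((x != 0) || (z != 0)) /\ X * phi z = phi x * Z.
Proof.
have [-> _ _|X_neq0 _ fixed] := eqVneq X 0.
  by exists 0, 1; rewrite oner_neq0 orbT mul0r rmorph0 mul0r.
have [c hc] : exists c, Z / X = phi c.
  apply: expr_card_fixed; apply/eqP.
  by rewrite exprMn exprVn eqr_div ?expf_neq0 // mulrC fixed mulrC.
by exists 1, c; rewrite oner_neq0 rmorph1 mul1r -hc mulrC divfK.
Qed.

End Frobenius.

(* For d = 1 the matrix of the conic, [[2a, b, c], [b, 0, 1], [c, 1, 2e]],
   has determinant -2 (a + e b^2 - b c). *)
Definition conic_disc (R : comNzRingType) (a b c e : R) : R := a + e * b ^+ 2 - b * c.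

Lemma nonsingular_conic_disc_neq0 (R : comNzRingType) (a b c e : R) :
  (forall v, ~ singular_point (conic_poly a b c 1 e) v) -> conic_disc a b c e != 0.
Proof.
move=> nonsing; apply/eqP => disc0.
apply: (nonsing (fun i => match val i with 0 => 1 | 1 => 2 * e * b - c | _ => - b end)).
split; first by exists i0; rewrite oner_neq0.
split.
  by rewrite /conic_poly !(mevalD, mevalM, mevalZ, mevalXU) /= -disc0 /conic_disc; ring.
case=> [[|[|[|//]]] Hi]; rewrite /conic_poly !(mderivD, mderivM, mderivZ, mderivXU) /=;
  rewrite !(mevalD, mevalM, mevalZ, mevalXU, rmorph_nat) /=.
- by rewrite -[RHS](mulr0 2) -disc0 /conic_disc; ring.
- by ring.
- by ring.
Qed.

Definition delta1 (R : comNzRingType) (w a1 b1 b2 c1 c2 e1 e2 : R) : R :=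
  a1 + e1 * (b1 ^+ 2 + w * b2 ^+ 2) + 2 * w * e2 * b1 * b2 - b1 * c1 - w * b2 * c2.
Definition delta2 (R : comNzRingType) (w a2 b1 b2 c1 c2 e1 e2 : R) : R :=
  a2 + e2 * (b1 ^+ 2 + w * b2 ^+ 2) + 2 * e1 * b1 * b2 - b1 * c2 - b2 * c1.

Section DiscriminantComponents.
Variables (F L : comNzRingType) (f : {rmorphism F -> L}) (w : F) (r : L).
Hypothesis r2 : r ^+ 2 = f w.
Variables (a1 a2 b1 b2 c1 c2 e1 e2 : F).

Lemma conic_disc_split :
  conic_disc (f a1 + r * f a2) (f b1 + r * f b2) (f c1 + r * f c2) (f e1 + r * f e2)
  = f (delta1 w a1 b1 b2 c1 c2 e1 e2) + r * f (delta2 w a2 b1 b2 c1 c2 e1 e2).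
Proof.
rewrite /conic_disc /delta1 /delta2.
by rewrite !(rmorph_nat, rmorphD, rmorphB, rmorphM, rmorphN, rmorphXn) -r2; ring.
Qed.

Lemma cubic_form_surfcoef :
  cubic_form (f (surfcoefA a1 a2 b1 b2)) (f (surfcoefB a1 a2 b1 b2 c1 c2 1 0))
    (f (surfcoefC b1 b2 c1 c2 1 0 e1 e2)) (f (surfcoefD 1 0 e1 e2)) 1 (r * f b2 - f b1)
  = f b2 * (f (delta1 w a1 b1 b2 c1 c2 e1 e2) - r * f (delta2 w a2 b1 b2 c1 c2 e1 e2)).
Proof.
rewrite /cubic_form /surfcoefA /surfcoefB /surfcoefC /surfcoefD /delta1 /delta2.
by rewrite !(rmorph_nat, rmorphD, rmorphB, rmorphM, rmorphN, rmorphXn, rmorph1, rmorph0) -r2; ring.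
Qed.

End DiscriminantComponents.

Lemma surfcoef_eq0_delta (F : idomainType) (w a1 a2 b1 b2 c1 c2 e1 e2 : F) : b2 != 0 ->
  surfcoefA a1 a2 b1 b2 = 0 -> surfcoefB a1 a2 b1 b2 c1 c2 1 0 = 0 ->
  surfcoefC b1 b2 c1 c2 1 0 e1 e2 = 0 -> surfcoefD 1 0 e1 e2 = 0 ->
  delta1 w a1 b1 b2 c1 c2 e1 e2 = 0 /\ delta2 w a2 b1 b2 c1 c2 e1 e2 = 0.
Proof.
rewrite /surfcoefA /surfcoefB /surfcoefC /surfcoefD => b2_neq0 A0 B0 C0 D0.
have e2E : e2 = 0 by rewrite -oppr0 -D0; ring.
have c2E : c2 = b2 * e1 - b1 * e2 by rewrite -[LHS]addr0 -C0; ring.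
have a2E : a2 = b2 * c1 - b1 * c2 by rewrite -[LHS]addr0 -B0; ring.
split; last by rewrite /delta2 a2E c2E e2E; ring.
apply: (mulfI b2_neq0); rewrite mulr0 -A0 /delta1 a2E c2E e2E; ring.
Qed.

Lemma fmorph_sqrt_indep (F M : fieldType) (phi : {rmorphism F -> M}) (w x y : F) (r : M) :
  (forall s : F, s ^+ 2 != w) -> r ^+ 2 = phi w -> phi x = r * phi y -> x = 0 /\ y = 0.
Proof.
move=> w_nonsq r2 xy.
have [y0|y_neq0] := eqVneq y 0.
  by move/eqP: xy; rewrite y0 rmorph0 mulr0 fmorph_eq0 => /eqP.
have r_img : r = phi (x / y) by rewrite fmorph_div xy mulfK // fmorph_eq0.
by have := w_nonsq (x / y); rewrite -(fmorph_eq phi) rmorphXn -r_img r2 eqxx.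
Qed.

Section SurfaceEquations.
Variables (R : comNzRingType) (w b1 b2 d1 d2 A B C D : R) (v : 'I_4 -> R).
Local Notation S := (surface_poly w b1 b2 d1 d2 A B C D).
Local Notation t1 := (v i0).
Local Notation t2 := (v i1).
Local Notation X := (v i2).
Local Notation Z := (v i3).

Ltac eval_surface :=
  rewrite /surface_poly /cubic_form /cubic_dX /cubic_dZ /=;
  rewrite ?(mderivD, mderivN, mderivM, mderivZ, mderivXU, mderivC) /=;
  rewrite !(mevalD, mevalN, mevalM, mevalZ, mevalXU, rmorph_nat, mevalC); ring.

Lemma surface_eval : S.@[v] =
  2 * t1 * t2 * (b1 * X + d1 * Z) - (t1 ^+ 2 + w * t2 ^+ 2) * (b2 * X + d2 * Z)
  + cubic_form A B C D X Z.
Proof. by eval_surface. Qed.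

Lemma surface_deriv_t1 : (mderiv i0 S).@[v] =
  2 * (t2 * (b1 * X + d1 * Z) - t1 * (b2 * X + d2 * Z)).
Proof. by eval_surface. Qed.

Lemma surface_deriv_t2 : (mderiv i1 S).@[v] =
  2 * (t1 * (b1 * X + d1 * Z) - w * t2 * (b2 * X + d2 * Z)).
Proof. by eval_surface. Qed.

Lemma surface_deriv_X : (mderiv i2 S).@[v] =
  2 * t1 * t2 * b1 - (t1 ^+ 2 + w * t2 ^+ 2) * b2 + cubic_dX A B C D X Z.
Proof. by eval_surface. Qed.

Lemma surface_deriv_Z : (mderiv i3 S).@[v] =
  2 * t1 * t2 * d1 - (t1 ^+ 2 + w * t2 ^+ 2) * d2 + cubic_dZ A B C D X Z.
Proof. by eval_surface. Qed.

Lemma surface_deriv_t1t1 : (mderiv i0 (mderiv i0 S)).@[v] = - 2 * (b2 * X + d2 * Z).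
Proof. by eval_surface. Qed.

Lemma surface_deriv_t1t2 : (mderiv i1 (mderiv i0 S)).@[v] = 2 * (b1 * X + d1 * Z).
Proof. by eval_surface. Qed.

End SurfaceEquations.

Section SurfaceSingularPoints.
Variables (K : fieldType) (w b1 b2 A B C D : K).
Hypotheses (two_neq0 : (2 : K) != 0) (w_neq0 : w != 0) (b2_neq0 : b2 != 0).
Hypothesis cubic_neq0_at_sqrt :
  forall r, r ^+ 2 = w -> cubic_form A B C D 1 (r * b2 - b1) != 0.
Local Notation S := (surface_poly w b1 b2 1 0 A B C D).

Let half_eq0 (x : K) : 2 * x = 0 -> x = 0.
Proof. by move/eqP; rewrite mulf_eq0 (negbTE two_neq0) => /eqP. Qed.

Let mul_sqr_form_eq0 (t1 t2 : K) :
  t1 * t2 = 0 -> t1 ^+ 2 + w * t2 ^+ 2 = 0 -> t1 = 0 /\ t2 = 0.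
Proof.
move/eqP; rewrite mulf_eq0 => /orP[]/eqP-> /eqP; rewrite expr0n /=.
- by rewrite add0r mulf_eq0 (negbTE w_neq0) sqrf_eq0 => /eqP.
- by rewrite mulr0 addr0 sqrf_eq0 => /eqP.
Qed.

Lemma surface_singular_t0 (P : 'I_4 -> K) : singular_point S P -> P i0 = 0 /\ P i1 = 0.
Proof.
move=> [_ [S0 dS]]; move: S0 (dS i0) (dS i1) (dS i2) (dS i3) => {dS}.
rewrite surface_eval surface_deriv_t1 surface_deriv_t2 surface_deriv_X surface_deriv_Z.
rewrite !mul1r !mul0r !addr0 !mulr0 !subr0 !mulr1.
set t1 := P i0; set t2 := P i1; set X := P i2; set Z := P i3.
move=> S0 /half_eq0/subr0_eq dt1 /half_eq0/subr0_eq dt2 dX dZ.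
have [X0|X_neq0] := eqVneq X 0.
  rewrite X0 !mulr0 add0r in dt1 dt2.
  have [Z0|Z_neq0] := eqVneq Z 0; last first.
    by move/eqP: dt1; move/eqP: dt2; rewrite !mulf_eq0 (negbTE Z_neq0) !orbF => /eqP-> /eqP->.
  have [dX00 dZ00] : cubic_dX A B C D 0 0 = 0 /\ cubic_dZ A B C D 0 0 = 0.
    by split; rewrite /cubic_dX /cubic_dZ; ring.
  rewrite X0 Z0 dX00 dZ00 !addr0 -!(mulrA 2) in dX dZ.
  have t12 := half_eq0 dZ.
  apply: mul_sqr_form_eq0 => //; apply: (mulIf b2_neq0).
  by move/eqP: dX; rewrite t12 mul0r mulr0 sub0r oppr_eq0 mul0r => /eqP.
have b2X_neq0 : b2 * X != 0 by rewrite mulf_neq0.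
pose r := (b1 * X + Z) / (b2 * X).
have b1XZ : b1 * X + Z = r * (b2 * X) by rewrite divfK.
have t1E : t1 = r * t2 by apply: (mulIf b2X_neq0); rewrite -dt1 b1XZ; ring.
have [t2_0|t2_neq0] := eqVneq t2 0; first by rewrite t1E t2_0 mulr0.
have r2 : r ^+ 2 = w.
  apply: (mulIf (mulf_neq0 t2_neq0 b2X_neq0)).
  by rewrite [RHS]mulrA -dt2 t1E b1XZ; ring.
have : cubic_form A B C D X Z = 0 by rewrite -S0 t1E b1XZ -r2; ring.
have -> : Z = X * (r * b2 - b1) by rewrite -[Z](addKr (b1 * X)) b1XZ; ring.
rewrite -[X in cubic_form _ _ _ _ X]mulr1 cubic_form_homog => /eqP.
by rewrite mulf_eq0 expf_eq0 (negbTE X_neq0) andbF (negbTE (cubic_neq0_at_sqrt r2)).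
Qed.

Lemma surface_singular_pointP (P : 'I_4 -> K) : singular_point S P ->
  [/\ P i0 = 0, P i1 = 0, (P i2 != 0) || (P i3 != 0)
    & cubic_singular A B C D (P i2) (P i3)].
Proof.
move=> sP; have [t1_0 t2_0] := surface_singular_t0 sP.
case: sP => [[i Pi_neq0] [S0 dS]].
split=> //.
  by case: (ord4_cases i) Pi_neq0 => ->; rewrite ?t1_0 ?t2_0 ?eqxx // => ->; rewrite ?orbT.
split.
- by move: S0; rewrite surface_eval t1_0 t2_0 => <-; ring.
- by move: (dS i2); rewrite surface_deriv_X t1_0 t2_0 => <-; ring.
- by move: (dS i3); rewrite surface_deriv_Z t1_0 t2_0 => <-; ring.
Qed.

Lemma surface_singular_double (P : 'I_4 -> K) : singular_point S P -> double_point S P.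
Proof.
move=> sP; split=> //; have [_ _ XZ_neq0 _] := surface_singular_pointP sP.
have [X0|X_neq0] := eqVneq (P i2) 0.
  exists i0, i1; rewrite surface_deriv_t1t2 X0 mulr0 add0r mul1r mulf_neq0 //.
  by rewrite X0 eqxx in XZ_neq0.
by exists i0, i0; rewrite surface_deriv_t1t1 mul0r addr0 !mulf_neq0 // oppr_eq0.
Qed.

End SurfaceSingularPoints.

Lemma proj_eq_line (K : fieldType) (P Q : 'I_4 -> K) :
  P i0 = 0 -> P i1 = 0 -> Q i0 = 0 -> Q i1 = 0 ->
  (P i2 != 0) || (P i3 != 0) -> (Q i2 != 0) || (Q i3 != 0) ->
  P i2 * Q i3 = Q i2 * P i3 -> proj_eq P Q.
Proof.
move=> P0 P1 Q0 Q1 P_neq0 Q_neq0 PQ.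
suff [l l_neq0 [P2 P3]] : exists2 l, l != 0 & P i2 = l * Q i2 /\ P i3 = l * Q i3.
  by exists l; split=> // i; case: (ord4_cases i) => ->; rewrite ?P0 ?Q0 ?P1 ?Q1 ?mulr0.
have [Q2_0|Q2_neq0] := eqVneq (Q i2) 0.
  have Q3_neq0 : Q i3 != 0 by rewrite Q2_0 eqxx in Q_neq0.
  have P2_0 : P i2 = 0 by apply: (mulIf Q3_neq0); rewrite PQ Q2_0 !mul0r.
  exists (P i3 / Q i3); last by rewrite P2_0 Q2_0 mulr0 divfK.
  by rewrite P2_0 eqxx in P_neq0; rewrite mulf_neq0 ?invr_neq0.
have P2_neq0 : P i2 != 0.
  apply: contraTneq P_neq0 => P2_0; move/eqP: PQ.
  by rewrite P2_0 mul0r eq_sym mulf_eq0 (negbTE Q2_neq0) => /eqP->; rewrite eqxx.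
exists (P i2 / Q i2); first by rewrite mulf_neq0 ?invr_neq0.
by rewrite divfK // mulrAC PQ [Q i2 * _]mulrC mulfK.
Qed.

Theorem mainTheorem6
  (F : finFieldType) (L : fieldExtType F)
  (odd_char : (2%:R : F) != 0)
  (dimL : \dim (fullv : {vspace L}) = 2%N)
  (w : F) (w_nonsq : forall x : F, x ^+ 2 != w)
  (eps : L) (eps2 : eps ^+ 2 = (in_alg L w))
  (a1 a2 b1 b2 c1 c2 e1 e2 : F)
  (conic_nonsing : forall v : 'I_3 -> L,
     ~ singular_point
         (conic_poly ((in_alg L a1) + eps * (in_alg L a2)) ((in_alg L b1) + eps * (in_alg L b2))
                     ((in_alg L c1) + eps * (in_alg L c2)) 1 ((in_alg L e1) + eps * (in_alg L e2))) v)
  (b_notin_Fq : b2 != 0) :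
  let d1 : F := 1 in let d2 : F := 0 in
  forall (M : closedFieldType) (phi : {rmorphism F -> M}),
  let S : {mpoly M[4]} :=
    surface_poly (phi w) (phi b1) (phi b2) (phi d1) (phi d2)
      (phi (surfcoefA a1 a2 b1 b2)) (phi (surfcoefB a1 a2 b1 b2 c1 c2 d1 d2))
      (phi (surfcoefC b1 b2 c1 c2 d1 d2 e1 e2)) (phi (surfcoefD d1 d2 e1 e2)) in
  (forall P Q : 'I_4 -> M, singular_point S P -> singular_point S Q ->
     proj_eq P Q)
  /\ (forall P : 'I_4 -> M, singular_point S P ->
       double_point S P
       /\ exists P0 : 'I_4 -> F, proj_eq P (fun i => phi (P0 i))).
Proof.
move=> d1 d2 M phi S; rewrite /S /d1 /d2 rmorph1 rmorph0 {S}.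
have delta_neq0 : ~ (delta1 w a1 b1 b2 c1 c2 e1 e2 = 0 /\ delta2 w a2 b1 b2 c1 c2 e1 e2 = 0).
  move=> [delta1_0 delta2_0]; have := nonsingular_conic_disc_neq0 conic_nonsing.
  by rewrite (conic_disc_split eps2) delta1_0 delta2_0 !rmorph0 mulr0 addr0 eqxx.
have two_neq0 : (2 : M) != 0 by rewrite -(rmorph_nat phi) fmorph_eq0.
have w_neq0 : phi w != 0 by move: (w_nonsq 0); rewrite fmorph_eq0 expr2 mul0r eq_sym.
have b2_neq0 : phi b2 != 0 by rewrite fmorph_eq0.
set cA := phi (surfcoefA _ _ _ _); set cB := phi (surfcoefB _ _ _ _ _ _ _ _).
set cC := phi (surfcoefC _ _ _ _ _ _ _ _); set cD := phi (surfcoefD _ _ _ _).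
have cubic_neq0 : ~ [/\ cA = 0, cB = 0, cC = 0 & cD = 0].
  move=> [A0 B0 C0 D0]; apply: delta_neq0; apply: surfcoef_eq0_delta b_notin_Fq _ _ _ _;
    by apply: (fmorph_inj phi); rewrite rmorph0.
have cubic_neq0_at_sqrt r :
    r ^+ 2 = phi w -> cubic_form cA cB cC cD 1 (r * phi b2 - phi b1) != 0.
  move=> r2; rewrite (cubic_form_surfcoef r2) mulf_neq0 // subr_eq0.
  by apply/eqP => /(fmorph_sqrt_indep w_nonsq r2).
have sing := surface_singular_pointP two_neq0 w_neq0 b2_neq0 cubic_neq0_at_sqrt.
split=> [P Q /sing[P0 P1 P_neq0 P_sing] /sing[Q0 Q1 Q_neq0 Q_sing] | P sP].
  exact: proj_eq_line (cubic_singular_proportional two_neq0 cubic_neq0 P_sing Q_sing).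
split; first exact: surface_singular_double two_neq0 w_neq0 b2_neq0 cubic_neq0_at_sqrt P sP.
have [P0 P1 P_neq0 P_sing] := sing P sP.
have [x [z [xz_neq0 Pxz]]] := frob_stable_ratio phi P_neq0
  (cubic_singular_proportional two_neq0 cubic_neq0 P_sing (cubic_singular_frob P_sing)).
exists (fun i => match val i with 2 => x | 3 => z | _ => 0 end).
by apply: proj_eq_line => //=; rewrite ?rmorph0 ?fmorph_eq0.
Qed.
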